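(* Let $\mu\in\mathcal P_c^*(\mathbb R^2)$. Then $\mathcal N_{\mathrm m}[\mu]\in L^\infty_\rho(\mathbb R)$.
   Context: $\mathbb S_1=\{x\in\mathbb R^2:\|x\|=1\}$; $\mathcal R_\theta[\mu]=(\langle\cdot,\theta\rangle)_\#\mu$. Fix a reference Borel probability measure $\rho$ on $\mathbb R$ without atoms. For a probability measure $\nu$ on $\mathbb R$ with $F_\nu(t)=\nu((-\infty,t])$, $F_\nu^{[-1]}(t)=\inf\{s:F_\nu(s)>t\}$ and the CDT is $\hat\nu=F_\nu^{[-1]}\circ F_\rho$; $\widehat{\mathcal R}_\theta[\mu]$ is the CDT of $\mathcal R_\theta[\mu]$. For $g\in L^2_\rho(\mathbb R)$, $\operatorname{mean}(g)=\int g\,\mathrm d\rho$, $\operatorname{std}(g)=(\int|g-\operatorname{mean}(g)|^2\mathrm d\rho)^{1/2}$. $\mathcal P_c^*(\mathbb R^2)$ is the set of compactly supported Borel probability measures on $\mathbb R^2$ whose support has affine hull of dimension $>1$. For such $\mu$: $\mathcal N_\theta[\mu](t)=\big(\widehat{\mathcal R}_\theta[\mu](t)-\operatorname{mean}(\widehat{\mathcal R}_\theta[\mu])\big)/\operatorname{std}(\widehat{\mathcal R}_\theta[\mu])$ and the max-normalized R-CDT is $\mathcal N_{\mathrm m}[\mu](t)=\sup_{\theta\in\mathbb S_1}\mathcal N_\theta[\mu](t)$, $t\in\mathbb R$. *)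

From HB Require Import structures.
From mathcomp Require Import all_boot all_order all_algebra.
From mathcomp Require Import all_classical all_reals all_analysis measurable_realfun.
Set Implicit Arguments. Unset Strict Implicit. Unset Printing Implicit Defensive.
Import Order.TTheory GRing.Theory Num.Theory.
Import numFieldNormedType.Exports.
Local Open Scope classical_set_scope.
Local Open Scope ring_scope.

Section Defs.
Variable R : realType.

(* Points of R^2 are pairs; R * R carries the product (= Borel) sigma-algebra. *)
Definition dot2 (x y : R * R) : R := x.1 * y.1 + x.2 * y.2.

Definition S1 : set (R * R) := [set th | th.1 ^+ 2 + th.2 ^+ 2 = 1].

Definition supp2 (mu : set (R * R) -> \bar R) : set (R * R) :=
  [set x | forall e : R, 0 < e ->
     (0%E < mu [set y | `|y.1 - x.1| < e /\ `|y.2 - x.2| < e])%O].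

(* affine hull of A has dimension <= 1  iff  A lies in an affine line *)
Definition in_affine_line (A : set (R * R)) : Prop :=
  exists (a : R * R) (c : R), a != (0, 0) /\ A `<=` [set x | dot2 a x = c].

Definition Pc_star (mu : probability (R * R)%type R) : Prop :=
  compact (supp2 mu) /\ ~ in_affine_line (supp2 mu).

(* CDF of the pushforward R_theta[mu] = (<.,theta>)_# mu *)
Definition cdf_radon (mu : probability (R * R)%type R) (th : R * R) (t : R) : R :=
  fine (mu ((fun x => dot2 x th) @^-1` [set` `]-oo, t]%R])).

Definition cdf (nu : set R -> \bar R) (t : R) : R := fine (nu [set` `]-oo, t]%R]).

Definition gen_inv (F : R -> R) (s : R) : R := inf [set u | s < F u].

Definition cdt_radon (rho : probability R R) (mu : probability (R * R)%type R)
  (th : R * R) (t : R) : R := gen_inv (cdf_radon mu th) (cdf rho t).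

Definition meanr (rho : probability R R) (g : R -> R) : R :=
  fine (\int[rho]_t (g t)%:E).

Definition stdr (rho : probability R R) (g : R -> R) : R :=
  Num.sqrt (fine (\int[rho]_t ((g t - meanr rho g) ^+ 2)%:E)).

Definition N_theta (rho : probability R R) (mu : probability (R * R)%type R)
  (th : R * R) (t : R) : R :=
  (cdt_radon rho mu th t - meanr rho (cdt_radon rho mu th))
    / stdr rho (cdt_radon rho mu th).

Definition N_max (rho : probability R R) (mu : probability (R * R)%type R)
  (t : R) : \bar R :=
  ereal_sup [set (N_theta rho mu th t)%:E | th in S1].

Definition in_Linfty (rho : probability R R) (f : R -> \bar R) : Prop :=
  measurable_fun [set: R] f /\
  exists C : R, {ae rho, forall t, (abse (f t) <= C%:E)%O}.

End Defs.

From Pilot Require Import Defs.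
From HB Require Import structures.
From mathcomp Require Import all_boot all_order all_algebra.
From mathcomp Require Import all_classical all_reals all_analysis measurable_realfun.
From mathcomp Require Import ring lra.
Import Order.TTheory GRing.Theory Num.Theory.
Import numFieldNormedType.Exports.
Local Open Scope classical_set_scope.
Local Open Scope ring_scope.

(* Compact support puts mu on a ball B(0, M), so every projected CDF vanishes
   below -2M and equals 1 from 2M on.  Hence each CDT is bounded by 2M,
   nondecreasing where F_rho < 1 and zero where F_rho = 1; this shape passes
   to each N_theta and to their supremum, which is therefore measurable.
   Boundedness reduces to a lower bound on the standard deviations that is
   uniform in theta: three non-collinear support points have, in every
   direction, two projections at distance gam > 0; small balls around them
   carry mass m > 0, so the CDT stays below one level on a set of rho-mass
   m/4 and above a level gam/2 higher on another (quantile sets, which exist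
   because rho has no atoms). *)

Section generalized_inverse.
Context {R : realType} {F : R -> R} {K : R}.
Hypothesis F_le1 : forall u, F u <= 1.
Hypothesis F_eq0 : forall u, u < - K -> F u = 0.
Hypothesis F_eq1 : forall {u}, K <= u -> F u = 1.

Lemma gen_inv_eq0 {s} : 1 <= s -> gen_inv F s = 0.
Proof.
move=> s1; rewrite /gen_inv (_ : [set u | s < F u] = set0) ?inf0 //.
by apply/seteqP; split => u //= /lt_le_trans/(_ (F_le1 u)); rewrite ltNge s1.
Qed.

Lemma gen_inv_le {s a} : 0 <= s -> s < F a -> gen_inv F s <= a.
Proof.
move=> s0; apply: ge_inf; exists (- K) => u /= sFu; rewrite leNgt; apply/negP.
by move/F_eq0 => Fu0; move: sFu; rewrite Fu0 ltNge s0.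
Qed.

Lemma gen_inv_ge {s b} : s < 1 -> (forall u, u < b -> F u <= s) ->
  b <= gen_inv F s.
Proof.
move=> s1 Fb; apply: lb_le_inf; first by exists K; rewrite /= F_eq1.
by move=> u /= sFu; rewrite leNgt; apply/negP => /Fb; rewrite leNgt sFu.
Qed.

Lemma le_gen_inv {s1 s2} : 0 <= s1 -> s1 <= s2 -> s2 < 1 ->
  gen_inv F s1 <= gen_inv F s2.
Proof.
move=> s10 s12 s21; apply: lb_le_inf; first by exists K; rewrite /= F_eq1.
by move=> u /= /(le_lt_trans s12); exact: gen_inv_le.
Qed.

Lemma gen_inv_bounded {s} : 0 <= s -> `|gen_inv F s| <= K.
Proof.
move=> s0; have K0 : 0 <= K.
  rewrite leNgt; apply/negP => K0; have := F_eq1 (lexx K).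
  by rewrite F_eq0 => [/eqP|]; [rewrite eq_sym oner_eq0 | lra].
have [s1|s1] := leP 1 s; first by rewrite gen_inv_eq0 // normr0.
rewrite ler_norml gen_inv_le ?F_eq1 // andbT.
by apply: gen_inv_ge => // u /F_eq0 ->.
Qed.

End generalized_inverse.

Section measure_monotone_limits.
Context d (T : measurableType d) (R : realType).
Local Open Scope ereal_scope.

Lemma measure_bigcup_le (nu : {measure set T -> \bar R}) (A : (set T)^nat) l :
  (forall n, measurable (A n)) -> nondecreasing_seq A ->
  (forall n, nu (A n) <= l) -> nu (\bigcup_n A n) <= l.
Proof.
move=> mA ndA Al.
have mcupA : measurable (\bigcup_n A n) by exact: bigcup_measurable.
have cvgA := nondecreasing_cvg_mu (mu := nu) mA mcupA ndA.
rewrite -(cvg_lim _ cvgA) //; apply: lime_le; first exact: cvgP cvgA.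
exact: nearW.
Qed.

Lemma measure_bigcap_ge (nu : {finite_measure set T -> \bar R})
    (A : (set T)^nat) l :
  (forall n, measurable (A n)) -> nonincreasing_seq A ->
  (forall n, l <= nu (A n)) -> l <= nu (\bigcap_n A n).
Proof.
move=> mA niA lA; have A0fin : nu (A 0%N) < +oo.
  by rewrite ltey_eq fin_num_measure.
have mcapA : measurable (\bigcap_n A n) by apply: bigcap_measurable => // n _.
have cvgA := nonincreasing_cvg_mu (mu := nu) A0fin mA mcapA niA.
rewrite -(cvg_lim _ cvgA) //; apply: lime_ge; first exact: cvgP cvgA.
exact: nearW.
Qed.

End measure_monotone_limits.

Lemma nondecreasing_on_measurable (R : realType) (D : set R) (f : R -> R) c :
  is_interval D -> (forall x y, D x -> D y -> x <= y -> f x <= f y) ->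
  (forall x, ~ D x -> f x = c) -> measurable_fun setT f.
Proof.
move=> iD fmono fc; have mD := is_interval_measurable iD.
rewrite -(setUv D); apply/measurable_funU => //; first exact: measurableC.
split; last first.
  apply: (eq_measurable_fun (cst c)); last exact: measurable_cst.
  by move=> x; rewrite inE => /fc ->.
apply: (measurability (@RGenCInfty.G R)) => [|/= _ [_] [r] -> <-].
  exact: RGenCInfty.measurableE.
apply: is_interval_measurable => x y [Dx fx] [Dy fy] z /andP [xz zy].
have Dz : D z by apply: (iD x y Dx Dy); rewrite xz zy.
split => //=; rewrite in_itv /= andbT; move: fx; rewrite /= in_itv /= andbT.
by move/le_trans; apply; exact: fmono.
Qed.

Section cdf_of_probability.
Context {R : realType} (rho : probability R R).
Local Notation Fr := (Defs.cdf rho).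

Lemma cdfrE t : rho `]-oo, t]%classic = (Fr t)%:E.
Proof. by rewrite /Defs.cdf fineK // fin_num_measure. Qed.

Lemma cdfr_ge0 t : 0 <= Fr t.
Proof. by rewrite /Defs.cdf fine_ge0. Qed.

Lemma cdfr_nondecreasing : nondecreasing_fun Fr.
Proof.
move=> x y xy; rewrite -lee_fin -!cdfrE le_measure ?inE //.
by apply: subset_itvl; rewrite bnd_simp.
Qed.

Lemma cdfr_itv_oc a b : a <= b -> rho `]a, b]%classic = (Fr b - Fr a)%:E.
Proof.
move=> ab; have mab : rho `]a, b]%classic = (fine (rho `]a, b]%classic))%:E.
  by rewrite fineK // fin_num_measure.
have := cdfrE b; rewrite (@itv_bndbnd_setU _ _ _ (BRight a)) ?bnd_simp //.
rewrite measureU //=; last first.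
  by rewrite -subset0 => t [] /=; rewrite !in_itv /= => ta /andP [a_t _]; lra.
by rewrite cdfrE mab -EFinD => -[<-]; rewrite mab; congr (_%:E); lra.
Qed.

Lemma cdfr_lt1_nondecreasing_measurable (f : R -> R) c :
  (forall x y, Fr y < 1 -> x <= y -> f x <= f y) ->
  (forall x, 1 <= Fr x -> f x = c) -> measurable_fun setT f.
Proof.
move=> fmono fc; apply: (@nondecreasing_on_measurable _ [set t | Fr t < 1] _ c).
- move=> x y _ Fy z /andP [_ zy].
  exact: le_lt_trans (cdfr_nondecreasing _ _ zy) Fy.
- by move=> x y _ Fy; exact: fmono.
- by move=> x /negP; rewrite -leNgt => /fc.
Qed.

Lemma cdfr_small e : 0 < e -> exists t, Fr t < e.
Proof.
move=> e0; apply/not_existsP => /= Fe.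
suff : (e%:E <= rho set0)%E by rewrite measure0 lee_fin leNgt e0.
have <- : \bigcap_n `]-oo, (- n%:R)%R]%classic = set0 :> set R.
  rewrite -subset0 => t /(_ (Num.truncn (- t)).+1 I); rewrite /= in_itv /= leNgt.
  by move/negP; apply; rewrite ltrNl truncnS_gt.
apply: measure_bigcap_ge => [n|m n mn|n]; first exact: measurable_itv.
  by apply/subsetPset; apply: subset_itvl; rewrite bnd_simp lerN2 ler_nat.
by rewrite /= cdfrE lee_fin leNgt; apply/negP.
Qed.

Lemma cdfr_large e : e < 1 -> exists t, e < Fr t.
Proof.
move=> e1; apply/not_existsP => /= Fe.
suff : (rho setT <= e%:E)%E by rewrite probability_setT lee_fin leNgt e1.
have <- : \bigcup_n `]-oo, n%:R]%classic = [set: R].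
  rewrite -subTset => t _; exists (Num.truncn t).+1 => //=.
  by rewrite in_itv /= ltW // truncnS_gt.
apply: measure_bigcup_le => [n|m n mn|n]; first exact: measurable_itv.
  by apply/subsetPset; apply: subset_itvl; rewrite bnd_simp ler_nat.
by rewrite /= cdfrE lee_fin leNgt; apply/negP.
Qed.

Lemma cdfr_ge_right t0 l : (forall t, t0 < t -> l <= Fr t) -> l <= Fr t0.
Proof.
move=> Fl; rewrite -lee_fin -cdfrE (itvNycEbigcap false).
apply: measure_bigcap_ge => [n|m n mn|n]; first exact: measurable_itv.
  apply/subsetPset; apply: subset_itvl; rewrite bnd_simp lerD2l.
  by rewrite lef_pV2 ?posrE // ler_nat.
by rewrite /= cdfrE lee_fin Fl // ltrDl invr_gt0.
Qed.

Hypothesis rho_no_atoms : forall x : R, rho [set x] = 0%E.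

Lemma cdfr_le_left t0 l : (forall t, t < t0 -> Fr t <= l) -> Fr t0 <= l.
Proof.
move=> Fl; rewrite -lee_fin -cdfrE -(@setUitv1 _ _ _ t0 true) ?bnd_simp //.
rewrite measureU //=; last first.
  by rewrite -subset0 => t [] /=; rewrite in_itv /= => + tt0; rewrite tt0 ltxx.
rewrite rho_no_atoms adde0.
have <- : \bigcup_n `]-oo, t0 - n.+1%:R^-1]%classic = `]-oo, t0[%classic.
  apply/seteqP; split => [t [n _]|t]; rewrite /= !in_itv /=.
    by move/le_lt_trans; apply; rewrite ltrBlDr ltrDl invr_gt0.
  by move/ltr_add_invr => [k tk]; exists k => //; rewrite /= in_itv /= lerBrDr ltW.
apply: measure_bigcup_le => [n|m n mn|n]; first exact: measurable_itv.
  apply/subsetPset; apply: subset_itvl; rewrite bnd_simp lerD2l lerN2.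
  by rewrite lef_pV2 ?posrE // ler_nat.
by rewrite /= cdfrE lee_fin Fl // ltrBlDr ltrDl invr_gt0.
Qed.

Lemma cdfr_quantile l : 0 < l -> l < 1 -> exists t, Fr t = l.
Proof.
move=> l0 l1; pose A := [set t | Fr t <= l].
have [ta /ltW Ata] := cdfr_small _ l0; have [tb Ftb] := cdfr_large _ l1.
have Atb : ubound A tb.
  move=> t At; rewrite leNgt; apply/negP => /ltW/cdfr_nondecreasing Ftbt.
  by move: (le_trans Ftbt At); rewrite leNgt Ftb.
exists (sup A); apply/eqP; rewrite eq_le; apply/andP; split.
  apply: cdfr_le_left => t /(sup_gt (ex_intro _ ta Ata)) [a Aa ta'].
  exact: le_trans (cdfr_nondecreasing _ _ (ltW ta')) Aa.
apply: cdfr_ge_right => t supt; rewrite leNgt; apply/negP => /ltW At.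
by move: supt; rewrite ltNge (ub_le_sup _ At) //; exists tb.
Qed.

End cdf_of_probability.

HB.saturate prod.

Section support.
Context {R : realType} (mu : probability (R * R)%type R).

Lemma ball_pairE (x : R * R) e :
  ball x e = [set y | `|y.1 - x.1| < e /\ `|y.2 - x.2| < e].
Proof. by apply/seteqP; split => y [y1 y2]; split; rewrite /ball /= distrC. Qed.

Lemma measurable_ball_pair (x : R * R) e : measurable (ball x e).
Proof. exact: measurableX (measurable_ball _ _) (measurable_ball _ _). Qed.

Lemma supp2_ball x e : supp2 mu x -> 0 < e -> (0 < mu (ball x e))%E.
Proof. by rewrite ball_pairE; apply. Qed.

Lemma not_supp2_ball x : ~ supp2 mu x -> exists2 e, 0 < e & mu (ball x e) = 0%E.
Proof.
move=> /existsNP [e /not_implyP [e0 /negP]]; rewrite -leNgt -ball_pairE => mu0.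
by exists e => //; apply/eqP; rewrite eq_le mu0 measure_ge0.
Qed.

Lemma compact_negligible (C : set (R * R)) :
  compact C -> (forall x, C x -> ~ supp2 mu x) -> mu.-negligible C.
Proof.
rewrite compact_cover => cC Cns.
have [e he] : {e : R * R -> R &
    forall x, C x -> 0 < e x /\ mu (ball x (e x)) = 0%E}.
  apply: (@choice _ _ (fun x ex => C x -> 0 < ex /\ mu (ball x ex) = 0%E)) => x.
  have [Cx|nCx] := pselect (C x); last by exists 0.
  by have [ex ex0 mux] := not_supp2_ball _ (Cns x Cx); exists ex.
have [|F FC CF] := cC _ C (fun x => ball x (e x)) (fun x _ => ball_open _ _).
  by move=> x Cx; exists x => //; apply: ballxx; exact: (he x Cx).1.
apply: (@negligibleS _ _ _ mu _ _ CF); rewrite /cover bigcup_fset big_seq.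
apply: big_ind => [|A B|x /FC]; [exact: negligible_set0|exact: negligibleU|].
rewrite inE => /he [_ mux0]; exact/(negligibleP mu (measurable_ball_pair _ _)).
Qed.

Lemma compact_supp2_concentrated :
  compact (supp2 mu) -> exists M : R, mu (ball 0 M) = 1%E.
Proof.
move=> /compact_bounded [M0 [_ M0supp]]; exists (`|M0| + 2).
have suppM : supp2 mu `<=` ball 0 (`|M0| + 2).
  have M0_lt : M0 < `|M0| + 1 by rewrite (le_lt_trans (ler_norm M0)) ?ltrDl.
  move=> x /(M0supp _ M0_lt) xM; rewrite ball_pairE /= !subr0.
  have : Num.max `|x.1| `|x.2| <= `|M0| + 1 := xM.
  by rewrite ge_max => /andP [x1 x2]; split; lra.
have null_out : mu.-negligible (~` ball 0 (`|M0| + 2)).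
  pose B n := `[- (n%:R : R), n%:R]%classic `*` `[- (n%:R : R), n%:R]%classic.
  apply: (@negligibleS _ _ _ _ (\bigcup_n (B n `&` ~` ball 0 (`|M0| + 2)))).
    move=> y /= yM; exists (Num.truncn (`|y.1| + `|y.2|)).+1 => //.
    have := truncnS_gt (`|y.1| + `|y.2|); rewrite /B /= !in_itv /= -!ler_norml.
    by have := normr_ge0 y.1; have := normr_ge0 y.2; split => //; split; lra.
  apply: negligible_bigcup => n; apply: compact_negligible.
    apply: compact_closedI; last exact/open_closedC/ball_open.
    by apply: compact_setX; exact: segment_compact.
  by move=> x [_ xM] /suppM.
have mball := measurable_ball_pair (0 : R * R) (`|M0| + 2).
move: null_out => /(negligibleP _ (measurableC mball)) null_out.
rewrite -(probability_setT mu) -(setUv (ball 0 (`|M0| + 2))) measureU //.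
- by rewrite null_out adde0.
- exact: measurableC.
- exact: setICr.
Qed.

Lemma supp2_seq_mass (s : seq (R * R)) r : 0 < r ->
  (forall P, P \in s -> supp2 mu P) ->
  exists m, [/\ 0 < m, m <= 1 & forall P, P \in s -> (m%:E <= mu (ball P r))%E].
Proof.
move=> r0; elim: s => [|P s IH] sP; first by exists 1.
have [|m [m0 m1 ms]] := IH; first by move=> Q Qs; apply: sP; rewrite inE Qs orbT.
have muP : mu (ball P r) = (fine (mu (ball P r)))%:E.
  by rewrite fineK // fin_num_measure //; exact: measurable_ball_pair.
have := supp2_ball P r (sP P (mem_head P s)) r0; rewrite muP lte_fin => mP0.
exists (Num.min m (fine (mu (ball P r)))); split.
- by rewrite lt_min m0.
- by rewrite ge_min m1.
move=> Q; rewrite inE => /predU1P [->|/ms mQ].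
  by rewrite {2}muP lee_fin ge_min lexx orbT.
by rewrite (le_trans _ mQ) // lee_fin ge_min lexx.
Qed.

End support.

Section radon_cdf.
Context {R : realType} (mu : probability (R * R)%type R).

Lemma measurable_dot2_le (th : R * R) t :
  measurable ((fun x => dot2 x th) @^-1` `]-oo, t]%classic).
Proof.
have mdot : measurable_fun setT (fun x => dot2 x th).
  by apply: measurable_funD; apply: measurable_funM;
    (exact: measurable_fst || exact: measurable_snd || exact: measurable_cst).
by rewrite -[X in measurable X]setTI; exact: mdot measurableT _ (measurable_itv _).
Qed.

Lemma cdf_radonE th t :
  mu ((fun x => dot2 x th) @^-1` `]-oo, t]%classic) = (cdf_radon mu th t)%:E.
Proof.
by rewrite /cdf_radon fineK // fin_num_measure //; exact: measurable_dot2_le.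
Qed.

Lemma cdf_radon_ge0 th t : 0 <= cdf_radon mu th t.
Proof. by rewrite /cdf_radon fine_ge0. Qed.

Lemma cdf_radon_le1 th t : cdf_radon mu th t <= 1.
Proof.
by rewrite -lee_fin -cdf_radonE probability_le1 //; exact: measurable_dot2_le.
Qed.

Lemma S1_norm_le1 (th : R * R) : S1 th -> `|th.1| <= 1 /\ `|th.2| <= 1.
Proof.
by rewrite /S1 /= => th1; split; rewrite ler_norml; apply/andP; split; nra.
Qed.

Lemma dot2_ball {th P y : R * R} {r} :
  S1 th -> ball P r y -> `|dot2 y th - dot2 P th| < 2 * r.
Proof.
move=> /S1_norm_le1 [th1 th2]; rewrite ball_pairE => -[y1 y2].
have -> : dot2 y th - dot2 P th = (y.1 - P.1) * th.1 + (y.2 - P.2) * th.2.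
  by rewrite /dot2; ring.
rewrite (le_lt_trans (ler_normD _ _)) // !normrM.
have := ler_piMr (normr_ge0 (y.1 - P.1)) th1.
have := ler_piMr (normr_ge0 (y.2 - P.2)) th2.
lra.
Qed.

Lemma cdf_radon_ge_mass {th P : R * R} {r m t : R} :
  S1 th -> (m%:E <= mu (ball P r))%E -> dot2 P th + 2 * r <= t ->
  m <= cdf_radon mu th t.
Proof.
move=> thS m_le Pt; rewrite -lee_fin -cdf_radonE (le_trans m_le) //.
have mP := measurable_ball_pair P r; have mle := measurable_dot2_le th t.
rewrite le_measure ?inE //.
by move=> y /(dot2_ball thS); rewrite ltr_norml /= in_itv /= => /andP [_]; lra.
Qed.

Lemma cdf_radon_le_mass {th Q : R * R} {r m u : R} :
  S1 th -> (m%:E <= mu (ball Q r))%E -> u <= dot2 Q th - 2 * r ->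
  cdf_radon mu th u <= 1 - m.
Proof.
move=> thS m_le uQ; rewrite -lee_fin -cdf_radonE.
have mQ := measurable_ball_pair Q r; have mle := measurable_dot2_le th u.
have sub : (fun x => dot2 x th) @^-1` `]-oo, u]%classic `<=` ~` ball Q r.
  move=> y /=; rewrite in_itv /= => yu /(dot2_ball thS).
  by rewrite ltr_norml => /andP [+ _]; lra.
have mC : measurable (~` ball Q r) by exact: measurableC.
apply: (@le_trans _ _ (mu (~` ball Q r))).
  by apply: le_measure; rewrite ?inE.
have muQ : mu (ball Q r) = (fine (mu (ball Q r)))%:E.
  by rewrite fineK ?fin_num_measure.
rewrite probability_setC // muQ -EFinB lee_fin.
by move: m_le; rewrite muQ lee_fin; lra.
Qed.

Lemma dot2_0l (th : R * R) : dot2 0 th = 0.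
Proof. by rewrite /dot2 !mul0r addr0. Qed.

Lemma cdf_radon_eq0 {M : R} {th : R * R} {u : R} :
  S1 th -> mu (ball 0 M) = 1%E ->
  u <= - (2 * M) -> cdf_radon mu th u = 0.
Proof.
move=> thS muM uM; apply/eqP; rewrite eq_le cdf_radon_ge0 andbT.
rewrite -(subrr 1) (cdf_radon_le_mass (Q := 0) (r := M) thS) ?muM //.
by rewrite dot2_0l sub0r.
Qed.

Lemma cdf_radon_eq1 {M : R} {th : R * R} {u : R} :
  S1 th -> mu (ball 0 M) = 1%E ->
  2 * M <= u -> cdf_radon mu th u = 1.
Proof.
move=> thS muM Mu; apply/eqP; rewrite eq_le cdf_radon_le1.
by rewrite (cdf_radon_ge_mass (P := 0) (r := M) thS) ?muM // dot2_0l add0r.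
Qed.

End radon_cdf.

Section moments.
Context {R : realType} (rho : probability R R).
Local Open Scope ereal_scope.

Lemma integral_le_cst (f : R -> \bar R) (C : R) : measurable_fun setT f ->
  (forall t, 0 <= f t <= C%:E) -> \int[rho]_t f t <= C%:E.
Proof.
move=> mf fC; apply: (@le_trans _ _ (\int[rho]_t (cst C%:E) t)).
  by apply: ge0_le_integral => // t _; have /andP [] := fC t.
suff -> : \int[rho]_t (cst C%:E) t = C%:E by [].
by rewrite integral_cst // -[RHS]mule1; congr (_ * _); exact: probability_setT.
Qed.

Lemma integral_ge_mass {f : R -> R} {S : set R} {k p : R} :
  measurable_fun setT f -> (forall t, (0 <= f t)%R) -> measurable S ->
  (0 <= k)%R -> (forall t, S t -> (k <= f t)%R) -> p%:E <= rho S ->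
  (k * p)%:E <= \int[rho]_t (f t)%:E.
Proof.
move=> mf f0 mS k0 kS pS; have mEf : measurable_fun setT (EFin \o f).
  exact/measurable_EFinP.
apply: (@le_trans _ _ (\int[rho]_(t in S) (f t)%:E)); last first.
  by apply: ge0_subset_integral => // t _; rewrite lee_fin.
apply: (@le_trans _ _ (\int[rho]_(t in S) (cst k%:E) t)); last first.
  by apply: ge0_le_integral => //; exact: measurable_funS mEf.
by rewrite integral_cst // EFinM; apply: lee_wpmul2l; rewrite ?lee_fin.
Qed.

Local Close Scope ereal_scope.

Lemma meanr_bounded {g : R -> R} {K : R} : measurable_fun setT g ->
  (forall t, `|g t| <= K) -> `|meanr rho g| <= K.
Proof.
move=> mg gK; have : (`|\int[rho]_t (g t)%:E| <= K%:E)%E.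
  apply: le_trans (le_abse_integral _ _ _) _ => //; first exact/measurable_EFinP.
  apply: integral_le_cst; first exact/measurableT_comp/measurable_EFinP.
  by move=> t; rewrite /= !lee_fin normr_ge0 gK.
by rewrite /meanr; case: (\int[rho]_t (g t)%:E)%E.
Qed.

Lemma stdr_ge {g : R -> R} {K a b p : R} {G H : set R} :
  measurable_fun setT g -> (forall t, `|g t| <= K) ->
  measurable G -> measurable H -> (p%:E <= rho G)%E -> (p%:E <= rho H)%E ->
  (forall t, G t -> g t <= a) -> (forall t, H t -> b <= g t) -> a <= b ->
  Num.sqrt (((b - a) / 2) ^+ 2 * p) <= stdr rho g.
Proof.
move=> mg gK mG mH pG pH Ga Hb ab; rewrite /stdr; apply: ler_wsqrtr.
set c := meanr rho g; have cK : `|c| <= K := meanr_bounded mg gK.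
have mf : measurable_fun setT (fun t => (g t - c) ^+ 2).
  by apply: measurable_funX; apply: measurable_funB.
have f0 t : 0 <= (g t - c) ^+ 2 by rewrite sqr_ge0.
have fin : (\int[rho]_t ((g t - c) ^+ 2)%:E)%E \is a fin_num.
  rewrite ge0_fin_numE ?integral_ge0 // => [|t _]; last by rewrite lee_fin.
  apply: (le_lt_trans (integral_le_cst _ ((K + K) ^+ 2) _ _)); last exact: ltry.
    exact/measurable_EFinP.
  move=> t; rewrite !lee_fin f0 /=; have := gK t.
  by move: cK; rewrite !ler_norml => /andP [? ?] /andP [? ?]; nra.
rewrite -lee_fin fineK //.
have [abc|abc] := leP ((a + b) / 2) c.
  apply: (integral_ge_mass mf f0 mG _ _ pG); first exact: sqr_ge0.
  by move=> t /Ga; nra.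
apply: (integral_ge_mass mf f0 mH _ _ pH); first exact: sqr_ge0.
by move=> t /Hb; nra.
Qed.

End moments.

Section width_of_a_triangle.
Context {R : realType}.

Definition det2 (u v : R * R) := u.1 * v.2 - u.2 * v.1.

Lemma S1_norm_sum_ge1 (th : R * R) : S1 th -> 1 <= `|th.1| + `|th.2|.
Proof.
rewrite /S1 /= => th1.
have e1 := real_normK (num_real th.1); have e2 := real_normK (num_real th.2).
have n1 := normr_ge0 th.1; have n2 := normr_ge0 th.2.
nra.
Qed.

Lemma det2_le_width (u v th : R * R) : S1 th ->
  `|det2 u v| <=
    (`|u.1| + `|u.2| + `|v.1| + `|v.2|) * (`|dot2 u th| + `|dot2 v th|).
Proof.
move=> /S1_norm_sum_ge1 th1; rewrite /det2; set d := u.1 * v.2 - u.2 * v.1.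
set du := dot2 u th; set dv := dot2 v th.
have E1 : th.1 * d = v.2 * du - u.2 * dv by rewrite /d /du /dv /dot2; ring.
have E2 : th.2 * d = u.1 * dv - v.1 * du by rewrite /d /du /dv /dot2; ring.
have B1 : `|th.1| * `|d| <= `|v.2| * `|du| + `|u.2| * `|dv|.
  by rewrite -normrM E1 -!normrM; apply: ler_normB.
have B2 : `|th.2| * `|d| <= `|u.1| * `|dv| + `|v.1| * `|du|.
  by rewrite -normrM E2 -!normrM; apply: ler_normB.
have := normr_ge0 d; have := normr_ge0 du; have := normr_ge0 dv.
have := normr_ge0 u.1; have := normr_ge0 u.2; have := normr_ge0 v.1.
have := normr_ge0 v.2.
nra.
Qed.

Lemma noncollinear_width (p1 p2 p3 : R * R) : det2 (p2 - p1) (p3 - p1) != 0 ->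
  exists2 gam, 0 < gam & forall th, S1 th -> exists P Q,
    [/\ P \in [:: p1; p2; p3], Q \in [:: p1; p2; p3] &
         gam <= dot2 Q th - dot2 P th].
Proof.
set s := [:: p1; p2; p3]; set u := p2 - p1; set v := p3 - p1 => det0.
set S := `|u.1| + `|u.2| + `|v.1| + `|v.2|.
have S0 : 0 <= S by rewrite !addr_ge0.
(* The [+ 1] spares a separate proof that [S] is positive. *)
set gam := `|det2 u v| / (2 * S + 1).
have gamE : gam * (2 * S + 1) = `|det2 u v| by rewrite divfK // gt_eqF //; lra.
have gam0 : 0 < gam by rewrite divr_gt0 ?normr_gt0 //; lra.
exists gam => // th thS.
have pick P Q : P \in s -> Q \in s -> gam <= `|dot2 Q th - dot2 P th| ->
    exists P Q, [/\ P \in s, Q \in s & gam <= dot2 Q th - dot2 P th].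
  move=> Ps Qs; have [PQ|PQ] := lerP 0 (dot2 Q th - dot2 P th).
    by rewrite ger0_norm // => ?; exists P, Q.
  by rewrite ltr0_norm // opprB => ?; exists Q, P.
have dotB (P Q : R * R) : dot2 (Q - P) th = dot2 Q th - dot2 P th.
  by rewrite /dot2 /=; ring.
have [gu|ug] := lerP gam `|dot2 u th|.
  by apply: (pick p1 p2); rewrite ?inE ?eqxx ?orbT // -dotB.
have [gv|vg] := lerP gam `|dot2 v th|.
  by apply: (pick p1 p3); rewrite ?inE ?eqxx ?orbT // -dotB.
have := det2_le_width u v th thS; rewrite -gamE -/S.
have := normr_ge0 (dot2 u th); have := normr_ge0 (dot2 v th).
nra.
Qed.

Lemma not_in_affine_line_noncollinear (A : set (R * R)) : ~ in_affine_line A ->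
  exists p1 p2 p3, [/\ A p1, A p2, A p3 & det2 (p2 - p1) (p3 - p1) != 0].
Proof.
move=> nline.
have [p1 A1] : exists p, A p.
  apply/not_existsP => A0; apply: nline; exists (1, 0), 0; split.
    by apply/eqP => -[] /eqP; rewrite oner_eq0.
  by move=> x /A0.
have [p2 [A2 p12]] : exists p, A p /\ p.1 != p1.1.
  apply/not_existsP => Ap; apply: nline; exists (1, 0), p1.1; split.
    by apply/eqP => -[] /eqP; rewrite oner_eq0.
  move=> x Ax /=; rewrite /dot2 /= mul1r mul0r addr0.
  by apply: contrapT => x1; apply: (Ap x); split => //; apply/eqP.
set a := (- (p2.2 - p1.2), p2.1 - p1.1).
have [p3 [A3 ap3]] : exists p, A p /\ dot2 a p != dot2 a p1.
  apply/not_existsP => Ap; apply: nline; exists a, (dot2 a p1); split.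
    by apply/eqP => -[_] /eqP; rewrite subr_eq0 (negPf p12).
  move=> x Ax /=; apply: contrapT => ax.
  by apply: (Ap x); split => //; apply/eqP.
exists p1, p2, p3; split => //; move: ap3; apply: contra.
rewrite /det2 /dot2 /a /= => /eqP det0.
by rewrite -subr_eq0 -det0; apply/eqP; ring.
Qed.

Lemma not_in_affine_line_width (A : set (R * R)) : ~ in_affine_line A ->
  exists s : seq (R * R), (forall P, P \in s -> A P) /\
    exists2 gam, 0 < gam & forall th, S1 th -> exists P Q,
      [/\ P \in s, Q \in s & gam <= dot2 Q th - dot2 P th].
Proof.
move=> /not_in_affine_line_noncollinear [p1 [p2 [p3 [A1 A2 A3]]]].
move=> /noncollinear_width width.
by exists [:: p1; p2; p3]; split => // P; rewrite !inE => /or3P [] /eqP ->.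
Qed.

End width_of_a_triangle.

Section cdt_radon.
Context {R : realType} (rho : probability R R) (mu : probability (R * R)%type R).
Local Notation Fr := (Defs.cdf rho).
Context {M : R}.
Hypothesis muM : mu (ball 0 M) = 1%E.

Let cdf_radon_eq0M {th} : S1 th ->
  forall u, u < - (2 * M) -> cdf_radon mu th u = 0.
Proof. by move=> thS u uM; rewrite (cdf_radon_eq0 mu thS muM) // ltW. Qed.

Let cdf_radon_eq1M {th} : S1 th ->
  forall u, 2 * M <= u -> cdf_radon mu th u = 1.
Proof. by move=> thS u Mu; rewrite (cdf_radon_eq1 mu thS muM Mu). Qed.

Lemma cdt_radon_eq0 th t : 1 <= Fr t -> cdt_radon rho mu th t = 0.
Proof. exact: (gen_inv_eq0 (cdf_radon_le1 mu th)). Qed.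

Lemma cdt_radon_bounded th t : S1 th -> `|cdt_radon rho mu th t| <= 2 * M.
Proof.
move=> thS; apply: (gen_inv_bounded (cdf_radon_le1 mu th)); last exact: cdfr_ge0.
  exact: cdf_radon_eq0M thS.
exact: cdf_radon_eq1M thS.
Qed.

Lemma cdt_radon_nondecreasing th x y : S1 th -> Fr y < 1 -> x <= y ->
  cdt_radon rho mu th x <= cdt_radon rho mu th y.
Proof.
move=> thS Fy xy.
apply: (le_gen_inv (cdf_radon_eq0M thS) (cdf_radon_eq1M thS)) Fy.
  exact: cdfr_ge0.
exact: cdfr_nondecreasing.
Qed.

Lemma measurable_cdt_radon th :
  S1 th -> measurable_fun setT (cdt_radon rho mu th).
Proof.
move=> thS; apply: (cdfr_lt1_nondecreasing_measurable rho _ 0).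
  by move=> x y; exact: cdt_radon_nondecreasing.
exact: cdt_radon_eq0.
Qed.

Lemma cdt_radon_le_mass {th P : R * R} {r m t : R} :
  S1 th -> (m%:E <= mu (ball P r))%E -> Fr t < m -> cdt_radon rho mu th t <= dot2 P th + 2 * r.
Proof.
move=> thS mP Ft; apply: (gen_inv_le (cdf_radon_eq0M thS) (cdfr_ge0 _ _)).
exact: lt_le_trans Ft (cdf_radon_ge_mass mu thS mP (lexx _)).
Qed.

Lemma cdt_radon_ge_mass {th Q : R * R} {r m t : R} :
  S1 th -> (m%:E <= mu (ball Q r))%E -> 1 - m < Fr t -> Fr t < 1 -> dot2 Q th - 2 * r <= cdt_radon rho mu th t.
Proof.
move=> thS mQ Ft Ft1; apply: (gen_inv_ge (cdf_radon_eq1M thS) Ft1) => u /ltW uQ.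
exact: le_trans (cdf_radon_le_mass mu thS mQ uQ) (ltW Ft).
Qed.

Hypothesis rho_no_atoms : forall x : R, rho [set x] = 0%E.

Lemma stdr_cdt_radon_ge : ~ in_affine_line (supp2 mu) ->
  exists2 del, 0 < del &
    forall th, S1 th -> del <= stdr rho (cdt_radon rho mu th).
Proof.
move=> /not_in_affine_line_width [s [s_supp [gam gam0 width]]].
(* Balls of radius [r] around [P] and [Q] project to intervals [4 r] apart,
   which the CDT reaches on sets of [rho]-mass [m / 4]. *)
pose r := gam / 8; have gam8 : gam = 8 * r by rewrite /r mulrC divfK.
have [|m [m0 m1 mass]] := supp2_seq_mass mu s r _ s_supp; first lra.
have quantile l : 0 < l -> l < 1 -> exists t, Fr t = l.
  exact: cdfr_quantile rho_no_atoms l.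
have [q1 Fq1] := quantile (m / 2) ltac:(lra) ltac:(lra).
have [q2 Fq2] := quantile (1 - m / 2) ltac:(lra) ltac:(lra).
have [q3 Fq3] := quantile (1 - m / 4) ltac:(lra) ltac:(lra).
have q23 : q2 <= q3.
  rewrite leNgt; apply/negP => /ltW/(cdfr_nondecreasing rho).
  by rewrite Fq2 Fq3; lra.
have rhoG : ((m / 4)%:E <= rho `]-oo, q1]%classic)%E.
  by rewrite cdfrE Fq1 lee_fin; lra.
have rhoH : ((m / 4)%:E <= rho `]q2, q3]%classic)%E.
  by rewrite cdfr_itv_oc // Fq2 Fq3 lee_fin; lra.
exists (Num.sqrt ((2 * r) ^+ 2 * (m / 4))) => [|th thS].
  by rewrite sqrtr_gt0 mulr_gt0 ?exprn_gt0 //; lra.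
have [P [Q [Ps Qs PQ]]] := width th thS.
apply: (le_trans _ (stdr_ge rho (measurable_cdt_radon th thS)
  (fun t => cdt_radon_bounded th t thS) (measurable_itv _) (measurable_itv _)
  rhoG rhoH _ _ (_ : dot2 P th + 2 * r <= dot2 Q th - 2 * r))).
- by apply: ler_wsqrtr; apply: ler_wpM2r; nra.
- move=> t; rewrite /= in_itv /= => tq1.
  apply: (cdt_radon_le_mass thS (mass P Ps)).
  by rewrite (le_lt_trans (cdfr_nondecreasing _ _ _ tq1)) // Fq1; lra.
- move=> t; rewrite /= in_itv /= => /andP [q2t tq3].
  apply: (cdt_radon_ge_mass thS (mass Q Qs)).
    by rewrite (lt_le_trans _ (cdfr_nondecreasing _ _ _ (ltW q2t))) // Fq2; lra.
  by rewrite (le_lt_trans (cdfr_nondecreasing _ _ _ tq3)) // Fq3; lra.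
- lra.
Qed.

Lemma N_theta_bounded {del : R} {th : R * R} {t : R} : 0 < del ->
  del <= stdr rho (cdt_radon rho mu th) -> S1 th ->
  `|N_theta rho mu th t| <= 4 * M / del.
Proof.
move=> del0 delS thS; have std0 := lt_le_trans del0 delS.
have num : `|cdt_radon rho mu th t - meanr rho (cdt_radon rho mu th)| <= 4 * M.
  have g_bounded := cdt_radon_bounded th ^~ thS.
  rewrite (le_trans (ler_normB _ _)) // (_ : 4 * M = 2 * M + 2 * M); last by ring.
  by rewrite lerD // (meanr_bounded rho (measurable_cdt_radon th thS) g_bounded).
rewrite /N_theta normrM normfV (gtr0_norm std0).
apply: le_trans (ler_wpM2r _ num) _; first by rewrite invr_ge0 ltW.
apply: ler_wpM2l; first exact: le_trans (normr_ge0 _) num.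
by rewrite lef_pV2 ?posrE.
Qed.

Lemma N_theta_nondecreasing th x y : S1 th -> Fr y < 1 -> x <= y ->
  N_theta rho mu th x <= N_theta rho mu th y.
Proof.
move=> thS Fy xy; apply: ler_wpM2r; first by rewrite invr_ge0 sqrtr_ge0.
by rewrite lerD2r; exact: cdt_radon_nondecreasing.
Qed.

Lemma N_max_bounded {C t : R} :
  (forall th, S1 th -> `|N_theta rho mu th t| <= C) ->
  exists2 x : R, N_max rho mu t = x%:E & `|x| <= C.
Proof.
move=> NC; have S1_10 : S1 ((1 : R), (0 : R)).
  by rewrite /S1 /= expr1n expr0n addr0.
have ub : (N_max rho mu t <= C%:E)%E.
  apply: ge_ereal_sup => _ [th thS <-]; rewrite lee_fin.
  exact: le_trans (ler_norm _) (NC th thS).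
have lb : ((- C)%:E <= N_max rho mu t)%E.
  apply: (@le_trans _ _ (N_theta rho mu (1, 0) t)%:E).
    by rewrite lee_fin; have := NC _ S1_10; rewrite ler_norml => /andP [].
  by apply: ereal_sup_ubound; exists (1, 0).
move: lb ub; case: (N_max rho mu t) => [x||] //= lb ub.
by exists x => //; rewrite ler_norml -!lee_fin lb ub.
Qed.

Lemma measurable_N_max {C : R} :
  (forall th t, S1 th -> `|N_theta rho mu th t| <= C) ->
  measurable_fun setT (N_max rho mu).
Proof.
move=> NC; have NE t : N_max rho mu t = (fine (N_max rho mu t))%:E.
  by have [x -> _] := N_max_bounded (fun th => NC th t).
(* Where [Fr >= 1] every CDT vanishes, so [N_max] takes this value. *)
pose c := fine (ereal_sup [set ((0 - meanr rho (cdt_radon rho mu th)) /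
  stdr rho (cdt_radon rho mu th))%:E | th in @S1 R]).
have mfine : measurable_fun setT (fine \o N_max rho mu).
  apply: (cdfr_lt1_nondecreasing_measurable rho _ c).
    move=> x y Fy xy; rewrite /= -lee_fin -!NE.
    apply: ge_ereal_sup => _ [th thS <-].
    apply: (@le_trans _ _ (N_theta rho mu th y)%:E).
      by rewrite lee_fin; exact: N_theta_nondecreasing.
    by apply: ereal_sup_ubound; exists th.
  move=> x Fx; rewrite /= /N_max; congr (fine (ereal_sup _)).
  by apply: eq_imagel => th _; rewrite /N_theta cdt_radon_eq0.
apply: (eq_measurable_fun (EFin \o (fine \o N_max rho mu))) => [t _|].
  by rewrite /= -NE.
exact: measurableT_comp.
Qed.

End cdt_radon.

Theorem proposition7 (R : realType) (rho : probability R R)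
  (rho_no_atoms : forall x : R, rho [set x] = 0%E)
  (mu : probability (R * R)%type R) (hmu : Pc_star mu) :
  in_Linfty rho (N_max rho mu).
Proof.
have [cpt nline] := hmu.
have [M muM] := compact_supp2_concentrated mu cpt.
have [del del0 delS] := stdr_cdt_radon_ge rho mu muM rho_no_atoms nline.
have N_bounded th t : S1 th -> `|N_theta rho mu th t| <= 4 * M / del.
  by move=> thS; exact: (N_theta_bounded rho mu muM del0 (delS th thS) thS).
split; first exact: (measurable_N_max rho mu muM N_bounded).
exists (4 * M / del); apply: aeW => t.
have [x -> xC] := N_max_bounded rho mu (fun th => N_bounded th t).
by rewrite lee_fin.
Qed.
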